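(* Let $B=B_1\circ B_2\circ\cdots\circ B_n$ be a composition of $n$ finite Blaschke products with $\deg B_j=k_j$ for $j=1,\dots,n$. Then $B$ has at most $\sum_{i=1}^n(k_i-1)$ distinct critical values.
   Context: A finite Blaschke product of degree $d$ is $B(z)=\gamma\prod_{j=1}^d \frac{z-a_j}{1-\overline{a_j}z}$ with $a_j\in\mathbb{D}$ and $|\gamma|=1$. The set of critical values of $B$ is $\{w\in\mathbb{D}: w=B(z)\text{ for some } z\in\mathbb{D} \text{ with } B'(z)=0\}$. *)

From Stdlib Require Import Reals List.
From Coquelicot Require Import Coquelicot.
Open Scope C_scope.

Definition in_disc (z : C) : Prop := (Cmod z < 1)%R.

Definition blaschke (g : C) (a : list C) : C -> C :=
  fun z => g * fold_right (fun aj acc => (z - aj) / (1 - Cconj aj * z) * acc) 1 a.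

Definition blaschke_data (g : C) (a : list C) : Prop :=
  Cmod g = 1%R /\ List.Forall in_disc a.

Definition blaschke_of (p : C * list C) : C -> C := blaschke (fst p) (snd p).

Definition bdeg (p : C * list C) : nat := length (snd p).

Definition compose_list (Bs : list (C * list C)) : C -> C :=
  fold_right (fun p f => fun z => blaschke_of p (f z)) (fun z => z) Bs.

Definition critical_point (f : C -> C) (z : C) : Prop :=
  is_derive (K := C_AbsRing) (V := C_NormedModule) f z (RtoC 0).

Definition critical_value (f : C -> C) (w : C) : Prop :=
  in_disc w /\ exists z, in_disc z /\ critical_point f z /\ w = f z.

(* A critical value of [B_1 o G] is, by the chain rule, either a critical value of
   [B_1] or the image under [B_1] of a critical value of [G]; by induction it suffices
   that a Blaschke product of degree [k >= 1] has at most [k - 1] critical points in the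
   disc.  By the quotient rule, [B' = g P / D^2] where [D = prod (1 - conj a_j z)] does
   not vanish on the disc and [P] is a polynomial of degree at most [2k - 2].  [P] is
   self-reciprocal, [z^(2k) conj (P (1 / conj z)) = z^2 P z], so each nonzero root [c]
   in the disc is paired with the root [1 / conj c] outside it; and [P 1 > 0], so
   [P <> 0].  If [P] has [m] distinct roots in the disc, then [2m - 1 <= 2k - 2]. *)

From Stdlib Require Import Reals List Lra Lia Classical.
From Coquelicot Require Import Coquelicot.
Open Scope C_scope.

Definition has_at_most {T : Type} (N : nat) (P : T -> Prop) : Prop :=
  exists s : list T, (length s <= N)%nat /\ forall x, P x -> In x s.

Lemma has_at_most_NoDup {T : Type} (N : nat) (P : T -> Prop) :
  (forall s, NoDup s -> (forall x, In x s -> P x) -> (length s <= N)%nat) ->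
  has_at_most N P.
Proof.
  revert P; induction N as [|N IHN]; intros P HP.
  - exists nil; split; [apply le_0_n|]. intros x Px; exfalso.
    enough (1 <= 0)%nat by lia.
    apply (HP (x :: nil)); [repeat constructor; auto | intros y [<-|[]]; exact Px].
  - destruct (classic (exists x, P x)) as [[x Px]|Hempty].
    + destruct (IHN (fun y => P y /\ y <> x)) as [s [Hlen Hcov]].
      { intros s Hnd Hs.
        enough (length (x :: s) <= S N)%nat by (simpl in *; lia).
        apply HP.
        - constructor; [intros Hx; exact (proj2 (Hs x Hx) eq_refl) | exact Hnd].
        - intros y [<-|Hy]; [exact Px | exact (proj1 (Hs y Hy))]. }
      exists (x :: s); split; [simpl; lia|].
      intros y Py. destruct (classic (y = x)) as [->|Hyx]; [left; reflexivity|].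
      right; apply Hcov; auto.
    + exists nil; split; [apply le_0_n|]. intros x Px; exfalso; eauto.
Qed.

Lemma has_at_most_subset {T : Type} (N : nat) (P Q : T -> Prop) :
  (forall x, P x -> Q x) -> has_at_most N Q -> has_at_most N P.
Proof. intros HPQ [s [Hlen Hcov]]; exists s; auto. Qed.

Lemma has_at_most_union {T : Type} (N1 N2 : nat) (P1 P2 : T -> Prop) :
  has_at_most N1 P1 -> has_at_most N2 P2 ->
  has_at_most (N1 + N2) (fun x => P1 x \/ P2 x).
Proof.
  intros [s1 [Hlen1 Hcov1]] [s2 [Hlen2 Hcov2]].
  exists (s1 ++ s2); split; [rewrite length_app; lia|].
  intros x [Hx|Hx]; apply in_or_app; auto.
Qed.

Lemma has_at_most_image {T U : Type} (N : nat) (P : T -> Prop) (f : T -> U) :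
  has_at_most N P -> has_at_most N (fun y => exists x, P x /\ y = f x).
Proof.
  intros [s [Hlen Hcov]]; exists (map f s); split; [rewrite length_map; exact Hlen|].
  intros y [x [Px ->]]; apply in_map; auto.
Qed.

Lemma length_remove_NoDup {T : Type} (eq_dec : forall x y : T, {x = y} + {x <> y})
  (x : T) (l : list T) :
  NoDup l -> (length l <= S (length (remove eq_dec x l)))%nat.
Proof.
  induction 1 as [|y l Hy Hnd IH]; simpl; [lia|].
  destruct (eq_dec x y) as [<-|Hxy]; simpl; [|lia].
  rewrite notin_remove by exact Hy; lia.
Qed.

(** * Polynomial functions *)

Lemma Cmult_integral (u v : C) : u * v = 0 -> u = 0 \/ v = 0.
Proof.
  intros Huv; destruct (Ceq_dec u 0) as [Hu|Hu]; [left; exact Hu | right].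
  replace v with (/ u * (u * v)) by (field; exact Hu); rewrite Huv; ring.
Qed.

(* Degree at most [n], in Horner form. *)
Fixpoint poly_fun (n : nat) (f : C -> C) : Prop :=
  match n with
  | O => exists c, forall z, f z = c
  | S m => exists c g, poly_fun m g /\ forall z, f z = c + z * g z
  end.

Lemma poly_fun_ext n f g : poly_fun n f -> (forall z, f z = g z) -> poly_fun n g.
Proof.
  destruct n as [|n]; simpl.
  - intros [c Hc] Hfg; exists c; intros z; rewrite <- Hfg; auto.
  - intros [c [h [Hh Hf]]] Hfg; exists c, h; split; auto.
    intros z; rewrite <- Hfg; auto.
Qed.

Lemma poly_fun_const n (c : C) : poly_fun n (fun _ => c).
Proof.
  revert c; induction n as [|n IHn]; intros c; simpl.
  - exists c; auto.
  - exists c, (fun _ => 0); split; [apply IHn | intros; ring].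
Qed.

Lemma poly_fun_S n f : poly_fun n f -> poly_fun (S n) f.
Proof.
  revert f; induction n as [|n IHn]; intros f.
  - intros [c Hc]; exists c, (fun _ => 0); split; [exists 0; auto|].
    intros z; rewrite Hc; ring.
  - intros [c [g [Hg Hf]]]; exists c, g; auto.
Qed.

Lemma poly_fun_le n m f : (n <= m)%nat -> poly_fun n f -> poly_fun m f.
Proof. induction 1; auto using poly_fun_S. Qed.

Lemma poly_fun_plus n f g :
  poly_fun n f -> poly_fun n g -> poly_fun n (fun z => f z + g z).
Proof.
  revert f g; induction n as [|n IHn]; intros f g.
  - intros [c Hc] [d Hd]; exists (c + d); intros z; rewrite Hc, Hd; auto.
  - intros [c [f1 [Hf1 Hf]]] [d [g1 [Hg1 Hg]]].
    exists (c + d), (fun z => f1 z + g1 z); split; [auto|].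
    intros z; rewrite Hf, Hg; ring.
Qed.

Lemma poly_fun_scal n (a : C) f : poly_fun n f -> poly_fun n (fun z => a * f z).
Proof.
  revert f; induction n as [|n IHn]; intros f.
  - intros [c Hc]; exists (a * c); intros z; rewrite Hc; auto.
  - intros [c [f1 [Hf1 Hf]]]; exists (a * c), (fun z => a * f1 z); split; [auto|].
    intros z; rewrite Hf; ring.
Qed.

Lemma poly_fun_mult n m f g :
  poly_fun n f -> poly_fun m g -> poly_fun (n + m) (fun z => f z * g z).
Proof.
  revert f; induction n as [|n IHn]; intros f Hf Hg.
  - destruct Hf as [c Hc].
    apply (poly_fun_ext _ _ _ (poly_fun_scal m c g Hg)); intros z; rewrite Hc; auto.
  - destruct Hf as [c [f1 [Hf1 Hf]]].
    apply (poly_fun_ext _ (fun z => c * g z + (0 + z * (f1 z * g z)))).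
    + apply poly_fun_plus.
      * apply (poly_fun_le m); [lia | apply poly_fun_scal; exact Hg].
      * exists 0, (fun z => f1 z * g z); auto.
    + intros z; rewrite Hf; ring.
Qed.

Lemma poly_fun_linear (u v : C) : poly_fun 1 (fun z => u + v * z).
Proof. exists u, (fun _ => v); split; [exists v; auto | intros; ring]. Qed.

Lemma poly_fun_factor n f r :
  poly_fun (S n) f -> exists h, poly_fun n h /\ forall z, f z = f r + (z - r) * h z.
Proof.
  revert f; induction n as [|n IHn]; intros f [c [g [Hg Hf]]].
  - destruct Hg as [d Hd]; exists (fun _ => d); split; [exists d; auto|].
    intros z; rewrite !Hf, !Hd; ring.
  - destruct (IHn g Hg) as [h [Hh Eh]].
    exists (fun z => g r + z * h z); split; [exists (g r), h; auto|].
    intros z; rewrite !Hf, (Eh z); ring.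
Qed.

Lemma poly_fun_NoDup_roots n f (z0 : C) (rs : list C) :
  poly_fun n f -> f z0 <> 0 -> NoDup rs -> (forall r, In r rs -> f r = 0) ->
  (length rs <= n)%nat.
Proof.
  revert f rs; induction n as [|n IHn]; intros f rs Hf Hz0 Hnd Hrs;
    (destruct rs as [|r rs]; [simpl; lia|]).
  - exfalso; destruct Hf as [c Hc]; apply Hz0.
    rewrite Hc, <- (Hc r); apply Hrs; left; reflexivity.
  - destruct (poly_fun_factor n f r Hf) as [h [Hh Eh]].
    assert (Hr : f r = 0) by (apply Hrs; left; reflexivity).
    inversion Hnd as [|? ? Hnotin Hnd']; subst.
    simpl; apply le_n_S, (IHn h); auto.
    + intros Hh0; apply Hz0; rewrite Eh, Hr, Hh0; ring.
    + intros s Hs.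
      assert (Hfs : f s = 0) by (apply Hrs; right; exact Hs).
      rewrite Eh, Hr, Cplus_0_l in Hfs.
      destruct (Cmult_integral _ _ Hfs) as [Hsr|Hhs]; [|exact Hhs].
      exfalso; apply Hnotin; replace r with s; [exact Hs|].
      replace s with (s - r + r) by ring; rewrite Hsr; ring.
Qed.

Lemma Cconj_RtoC (r : R) : Cconj (RtoC r) = RtoC r.
Proof. unfold Cconj, RtoC; simpl; rewrite Ropp_0; reflexivity. Qed.

Lemma Cmod2_mobius (a z : C) :
  (Cmod (1 - Cconj a * z) ^ 2 - Cmod (z - a) ^ 2 = (1 - Cmod a ^ 2) * (1 - Cmod z ^ 2))%R.
Proof.
  apply RtoC_inj.
  rewrite RtoC_minus, RtoC_mult, !RtoC_minus, !Cmod2_conj.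
  rewrite !Cminus_conj, Cmult_conj, Cconj_conj, Cconj_RtoC; ring.
Qed.

Lemma in_disc_Cmod2 (z : C) : in_disc z -> (Cmod z ^ 2 < 1)%R.
Proof. unfold in_disc; intros Hz; pose proof (Cmod_ge_0 z); nra. Qed.

Lemma mobius_den_neq0 (a z : C) : in_disc a -> in_disc z -> 1 - Cconj a * z <> 0.
Proof.
  intros Ha Hz Hden.
  pose proof (Cmod2_mobius a z) as Hid; rewrite Hden, Cmod_0 in Hid.
  pose proof (in_disc_Cmod2 a Ha); pose proof (in_disc_Cmod2 z Hz).
  pose proof (pow2_ge_0 (Cmod (z - a))); nra.
Qed.

Lemma mobius_in_disc (a z : C) :
  in_disc a -> in_disc z -> in_disc ((z - a) / (1 - Cconj a * z)).
Proof.
  intros Ha Hz; pose proof (mobius_den_neq0 a z Ha Hz) as Hden.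
  unfold in_disc; rewrite Cmod_div by exact Hden.
  apply Cmod_gt_0 in Hden.
  apply Rlt_div_l; [exact Hden|]; rewrite Rmult_1_l.
  pose proof (Cmod2_mobius a z).
  pose proof (in_disc_Cmod2 a Ha); pose proof (in_disc_Cmod2 z Hz).
  pose proof (Cmod_ge_0 (z - a)); nra.
Qed.

(** * Complex derivatives *)

(* The product rule of Coquelicot is stated for [AbsRing_NormedModule C_AbsRing], which is
   not convertible to the [C_NormedModule] used by [critical_point]. *)
Local Notation is_cderive :=
  (is_derive (K := C_AbsRing) (V := AbsRing_NormedModule C_AbsRing)).
Local Notation ex_cderive :=
  (ex_derive (K := C_AbsRing) (V := AbsRing_NormedModule C_AbsRing)).

Lemma is_cderive_C_NormedModule (f : C -> C) (z l : C) :
  is_cderive f z l <-> is_derive (K := C_AbsRing) (V := C_NormedModule) f z l.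
Proof.
  split; intros [_ Hdom]; split; auto.
  - apply (is_linear_scal_l (K := C_AbsRing) (V := C_NormedModule)).
  - apply (is_linear_scal_l (K := C_AbsRing) (V := AbsRing_NormedModule C_AbsRing)).
Qed.

Lemma is_cderive_unique (f : C -> C) (z l1 l2 : C) :
  is_cderive f z l1 -> is_cderive f z l2 -> l1 = l2.
Proof.
  intros H1 H2; apply is_cderive_C_NormedModule, is_C_derive_unique in H1, H2.
  rewrite <- H1; exact H2.
Qed.

Lemma is_cderive_val (f : C -> C) (z l1 l2 : C) :
  is_cderive f z l1 -> l1 = l2 -> is_cderive f z l2.
Proof. intros H <-; exact H. Qed.

Lemma is_cderive_id (z : C) : is_cderive (fun t => t) z (RtoC 1).
Proof. exact (is_derive_id (K := C_AbsRing) z). Qed.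

Lemma is_cderive_const (c z : C) : is_cderive (fun _ => c) z (RtoC 0).
Proof. exact (is_derive_const (K := C_AbsRing) (V := AbsRing_NormedModule C_AbsRing) c z). Qed.

Lemma is_cderive_minus (f g : C -> C) (z a b : C) :
  is_cderive f z a -> is_cderive g z b -> is_cderive (fun t => f t - g t) z (a - b).
Proof. exact (is_derive_minus (V := AbsRing_NormedModule C_AbsRing) f g z a b). Qed.

Lemma is_cderive_mult (f g : C -> C) (z a b : C) :
  is_cderive f z a -> is_cderive g z b ->
  is_cderive (fun t => f t * g t) z (a * g z + f z * b).
Proof. intros Ha Hb; exact (is_derive_mult (K := C_AbsRing) f g z a b Ha Hb Cmult_comm). Qed.

Lemma is_cderive_comp (f g : C -> C) (z a b : C) :
  is_cderive f (g z) a -> is_cderive g z b -> is_cderive (fun t => f (g t)) z (b * a).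
Proof. exact (is_derive_comp (K := C_AbsRing) (V := AbsRing_NormedModule C_AbsRing) f g z a b). Qed.

(* For [|y - w| < |w| / 2] one has [|y| > |w| / 2], whence
   [|1/y - 1/w + (y - w)/w^2| = |y - w|^2 / (|y| |w|^2) <= 2 |y - w|^2 / |w|^3]. *)
Lemma is_cderive_Cinv (w : C) : w <> 0 -> is_cderive Cinv w (- / (w * w)).
Proof.
  intros Hw; split; [apply (is_linear_scal_l (K := C_AbsRing))|].
  intros x Hx eps.
  apply (is_filter_lim_locally_unique (K := C_AbsRing) (V := AbsRing_NormedModule C_AbsRing))
    in Hx; subst x.
  destruct eps as [e He]; simpl.
  assert (HW : (0 < Cmod w)%R) by (apply Cmod_gt_0; exact Hw).
  set (W := Cmod w) in *.
  assert (Hdelta : (0 < Rmin (W / 2) (e * (W * W * W) / 2))%R).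
  { apply Rmin_pos; [lra|]. assert (0 < W * W * W)%R by (repeat apply Rmult_lt_0_compat; lra).
    nra. }
  apply (filter_imp (fun y : C => Cmod (y - w) < Rmin (W / 2) (e * (W * W * W) / 2))%R).
  2: exact (locally_ball_norm (K := C_AbsRing) (V := AbsRing_NormedModule C_AbsRing)
              w (mkposreal _ Hdelta)).
  intros y Hball.
  change (Cmod (/ y - / w - (y - w) * (- / (w * w))) <= e * Cmod (y - w))%R.
  set (r := Cmod (y - w)) in *.
  assert (Hr1 : (r < W / 2)%R) by (eapply Rlt_le_trans; [exact Hball | apply Rmin_l]).
  assert (Hr2 : (r < e * (W * W * W) / 2)%R) by (eapply Rlt_le_trans; [exact Hball | apply Rmin_r]).
  assert (Hy_lb : (W - r <= Cmod y)%R).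
  { pose proof (Cmod_triangle y (w - y)) as Htri.
    replace (y + (w - y)) with w in Htri by ring.
    replace (w - y) with (- (y - w)) in Htri by ring; rewrite Cmod_opp in Htri.
    unfold W, r; lra. }
  assert (Hy0 : y <> 0) by (intros ->; rewrite Cmod_0 in Hy_lb; lra).
  replace (/ y - / w - (y - w) * (- / (w * w))) with ((y - w) * (y - w) / (y * (w * w)))
    by (field; auto).
  rewrite Cmod_div by (repeat apply Cmult_neq_0; auto).
  rewrite !Cmod_mult; fold r W.
  assert (Hr0 : (0 <= r)%R) by apply Cmod_ge_0.
  apply Rle_div_l; [apply Rmult_lt_0_compat; nra|].
  assert (Cmod y * (W * W) >= W * W * W / 2)%R by nra.
  assert (r * r <= r * (e * (W * W * W) / 2))%R by nra.
  nra.
Qed.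

Lemma critical_value_comp (f g : C -> C) (w : C) :
  (forall z, in_disc z -> in_disc (g z)) ->
  (forall z, in_disc z -> ex_cderive f z) ->
  (forall z, in_disc z -> ex_cderive g z) ->
  critical_value (fun z => f (g z)) w ->
  critical_value f w \/ exists v, critical_value g v /\ w = f v.
Proof.
  intros Hg_disc Hf Hg [Hw [z [Hz [Hcrit ->]]]].
  destruct (Hg z Hz) as [dg Hdg], (Hf (g z) (Hg_disc z Hz)) as [df Hdf].
  assert (Hchain : dg * df = 0).
  { apply (is_cderive_unique (fun t => f (g t)) z); [apply is_cderive_comp; auto|].
    apply is_cderive_C_NormedModule, Hcrit. }
  destruct (Cmult_integral _ _ Hchain) as [Hdg0|Hdf0].
  - right; exists (g z); split; [|reflexivity].
    split; [auto|]; exists z; split; [exact Hz | split; [|reflexivity]].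
    apply is_cderive_C_NormedModule; rewrite <- Hdg0; exact Hdg.
  - left; split; [exact Hw|]; exists (g z); split; [auto | split; [|reflexivity]].
    apply is_cderive_C_NormedModule; rewrite <- Hdf0; exact Hdf.
Qed.

(** * Blaschke products *)

Definition bprod (l : list C) (z : C) : C :=
  fold_right (fun a acc => (z - a) / (1 - Cconj a * z) * acc) 1 l.

Definition bden (l : list C) (z : C) : C :=
  fold_right (fun a acc => (1 - Cconj a * z) * acc) 1 l.

Definition numden_factor (a z : C) : C := (z - a) * (1 - Cconj a * z).

Definition bnumden (l : list C) (z : C) : C :=
  fold_right (fun a acc => numden_factor a z * acc) 1 l.

Fixpoint crit_poly (l : list C) (z : C) : C :=
  match l with
  | nil => 0
  | a :: l' => (1 - a * Cconj a) * bnumden l' z + numden_factor a z * crit_poly l' z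
  end.

Lemma bprod_le_1 l z : List.Forall in_disc l -> in_disc z -> (Cmod (bprod l z) <= 1)%R.
Proof.
  induction 1 as [|a l Ha Hl IH]; intros Hz; simpl.
  - rewrite Cmod_1; lra.
  - rewrite Cmod_mult.
    pose proof (mobius_in_disc a z Ha Hz) as Hm; unfold in_disc in Hm.
    pose proof (Cmod_ge_0 (bprod l z)); pose proof (IH Hz); fold (bprod l z); nra.
Qed.

Lemma blaschke_in_disc g l z :
  Cmod g = 1%R -> List.Forall in_disc l -> l <> nil -> in_disc z -> in_disc (blaschke g l z).
Proof.
  intros Hg Hl Hnil Hz; destruct Hl as [|a l Ha Hl]; [congruence|].
  unfold in_disc, blaschke; simpl; rewrite !Cmod_mult, Hg, Rmult_1_l.
  pose proof (mobius_in_disc a z Ha Hz) as Hm; unfold in_disc in Hm.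
  pose proof (Cmod_ge_0 ((z - a) / (1 - Cconj a * z))).
  pose proof (bprod_le_1 l z Hl Hz); unfold bprod in *; nra.
Qed.

Lemma bden_neq0 l z : List.Forall in_disc l -> in_disc z -> bden l z <> 0.
Proof.
  induction 1 as [|a l Ha Hl IH]; intros Hz; simpl.
  - exact C1_nz.
  - apply Cmult_neq_0; [apply mobius_den_neq0 | apply IH]; auto.
Qed.

Lemma bnumden_bprod l z : List.Forall in_disc l -> in_disc z ->
  bnumden l z = bprod l z * (bden l z * bden l z).
Proof.
  induction 1 as [|a l Ha Hl IH]; intros Hz; simpl; [ring|].
  fold (bnumden l z) (bprod l z) (bden l z); rewrite IH by exact Hz.
  unfold numden_factor; field; apply mobius_den_neq0; auto.
Qed.

Lemma is_cderive_mobius a z : in_disc a -> in_disc z ->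
  is_cderive (fun t => (t - a) / (1 - Cconj a * t)) z
    ((1 - a * Cconj a) / ((1 - Cconj a * z) * (1 - Cconj a * z))).
Proof.
  intros Ha Hz; pose proof (mobius_den_neq0 a z Ha Hz) as Hden.
  eapply is_cderive_val.
  - apply is_cderive_mult.
    + apply is_cderive_minus; [apply is_cderive_id | apply is_cderive_const].
    + apply (is_cderive_comp Cinv (fun t => 1 - Cconj a * t)); [apply is_cderive_Cinv, Hden|].
      apply is_cderive_minus; [apply is_cderive_const|].
      apply (is_cderive_mult (fun _ => Cconj a) (fun t => t));
        [apply is_cderive_const | apply is_cderive_id].
  - simpl; field; exact Hden.
Qed.

Lemma is_cderive_bprod l z : List.Forall in_disc l -> in_disc z ->
  is_cderive (bprod l) z (crit_poly l z / (bden l z * bden l z)).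
Proof.
  induction 1 as [|a l Ha Hl IH]; intros Hz.
  - eapply is_cderive_val; [apply is_cderive_const | cbn; field].
  - eapply is_cderive_val.
    { apply (is_cderive_mult (fun t => (t - a) / (1 - Cconj a * t)) (bprod l));
        [apply is_cderive_mobius | apply IH]; auto. }
    cbn [crit_poly bden fold_right]; fold (bden l z).
    rewrite bnumden_bprod by auto.
    pose proof (mobius_den_neq0 a z Ha Hz); pose proof (bden_neq0 l z Hl Hz).
    unfold numden_factor; field; auto.
Qed.

Lemma is_cderive_blaschke (g : C) (l : list C) (z : C) :
  List.Forall in_disc l -> in_disc z ->
  is_cderive (blaschke g l) z (g * (crit_poly l z / (bden l z * bden l z))).
Proof.
  intros Hl Hz; eapply is_cderive_val.
  - apply (is_cderive_mult (fun _ => g) (bprod l)); [apply is_cderive_const|].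
    apply is_cderive_bprod; auto.
  - ring.
Qed.

Lemma ex_cderive_blaschke (g : C) (l : list C) (z : C) :
  List.Forall in_disc l -> in_disc z -> ex_cderive (blaschke g l) z.
Proof. intros Hl Hz; eexists; apply is_cderive_blaschke; auto. Qed.

(** * Critical points of a Blaschke product *)

Lemma poly_fun_numden_factor a : poly_fun 2 (numden_factor a).
Proof.
  apply (poly_fun_ext _ (fun z => (- a + 1 * z) * (1 + - Cconj a * z))).
  - apply (poly_fun_mult 1 1); apply poly_fun_linear.
  - intros z; unfold numden_factor; ring.
Qed.

Lemma poly_fun_bnumden l : poly_fun (2 * length l) (bnumden l).
Proof.
  induction l as [|a l IH]; [exact (poly_fun_const 0 1)|].
  replace (2 * length (a :: l))%nat with (2 + 2 * length l)%nat by (simpl; lia).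
  apply (poly_fun_mult 2 _ (numden_factor a) (bnumden l));
    [apply poly_fun_numden_factor | exact IH].
Qed.

Lemma poly_fun_crit_poly l : poly_fun (2 * pred (length l)) (crit_poly l).
Proof.
  induction l as [|a [|b l] IH].
  - exact (poly_fun_const 0 0).
  - apply (poly_fun_ext _ (fun _ => 1 - a * Cconj a)); [apply poly_fun_const|].
    intros z; cbn; ring.
  - apply (poly_fun_ext _ (fun z => (1 - a * Cconj a) * bnumden (b :: l) z
                                   + numden_factor a z * crit_poly (b :: l) z));
      [|reflexivity].
    change (2 * pred (length (a :: b :: l)))%nat with (2 * length (b :: l))%nat.
    apply poly_fun_plus.
    + apply poly_fun_scal, poly_fun_bnumden.
    + replace (2 * length (b :: l))%nat with (2 + 2 * pred (length (b :: l)))%nat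
        by (simpl; lia).
      apply poly_fun_mult; [apply poly_fun_numden_factor | exact IH].
Qed.

Definition circle_inv (z : C) : C := / Cconj z.

Lemma Cconj_neq0 (z : C) : z <> 0 -> Cconj z <> 0.
Proof. intros Hz; apply Cmod_gt_0; rewrite Cmod_conj; apply Cmod_gt_0, Hz. Qed.

Lemma Cconj_circle_inv (z : C) : z <> 0 -> Cconj (circle_inv z) = / z.
Proof. intros Hz; unfold circle_inv; rewrite Cinv_conj, Cconj_conj; auto using Cconj_neq0. Qed.

Lemma circle_inv_involutive (z : C) : z <> 0 -> circle_inv (circle_inv z) = z.
Proof.
  intros Hz; unfold circle_inv at 1; rewrite Cconj_circle_inv by exact Hz.
  field; exact Hz.
Qed.

Lemma circle_inv_not_in_disc (z : C) : z <> 0 -> in_disc z -> ~ in_disc (circle_inv z).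
Proof.
  unfold in_disc, circle_inv; intros Hz Hdisc.
  rewrite Cmod_inv, Cmod_conj by (apply Cconj_neq0, Hz).
  apply Cmod_gt_0 in Hz.
  rewrite <- Rinv_1; apply Rle_not_lt, Rinv_le_contravar; lra.
Qed.

Lemma numden_factor_reflect (a z : C) : z <> 0 ->
  Cconj (numden_factor a (circle_inv z)) * (z * z) = numden_factor a z.
Proof.
  intros Hz; unfold numden_factor.
  rewrite Cmult_conj, !Cminus_conj, Cmult_conj, Cconj_conj, Cconj_RtoC, Cconj_circle_inv
    by exact Hz.
  field; exact Hz.
Qed.

Lemma bnumden_reflect (l : list C) (z : C) : z <> 0 ->
  Cconj (bnumden l (circle_inv z)) * z ^ (2 * length l) = bnumden l z.
Proof.
  intros Hz; induction l as [|a l IH]; simpl bnumden.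
  - rewrite Cconj_RtoC; simpl; ring.
  - replace (2 * length (a :: l))%nat with (2 + 2 * length l)%nat by (simpl; lia).
    rewrite Cpow_add_r, Cmult_conj, <- IH, <- (numden_factor_reflect a z Hz); simpl; ring.
Qed.

Lemma crit_poly_reflect (l : list C) (z : C) : z <> 0 ->
  Cconj (crit_poly l (circle_inv z)) * z ^ (2 * length l) = z * z * crit_poly l z.
Proof.
  intros Hz; induction l as [|a l IH]; simpl crit_poly.
  - rewrite Cconj_RtoC; ring.
  - replace (2 * length (a :: l))%nat with (2 + 2 * length l)%nat by (simpl; lia).
    rewrite Cpow_add_r, Cplus_conj, !Cmult_conj, Cminus_conj, Cmult_conj, Cconj_conj, Cconj_RtoC.
    transitivity ((1 - a * Cconj a) * bnumden l z * (z * z)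
                  + numden_factor a z * (z * z * crit_poly l z)); [|ring].
    rewrite <- IH, <- (bnumden_reflect l z Hz), <- (numden_factor_reflect a z Hz); simpl; ring.
Qed.

Lemma crit_poly_root_reflect (l : list C) (c : C) :
  c <> 0 -> crit_poly l c = 0 -> crit_poly l (circle_inv c) = 0.
Proof.
  intros Hc Hroot; pose proof (crit_poly_reflect l c Hc) as Hrefl.
  rewrite Hroot, Cmult_0_r in Hrefl.
  destruct (Cmult_integral _ _ Hrefl) as [Hconj|Hpow].
  - rewrite <- (Cconj_conj (crit_poly l (circle_inv c))), Hconj, Cconj_RtoC; reflexivity.
  - exfalso; exact (Cpow_nz c _ Hc Hpow).
Qed.

Lemma numden_factor_at_1 (a : C) : numden_factor a 1 = RtoC (Cmod (1 - a) ^ 2).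
Proof. rewrite Cmod2_conj, Cminus_conj, Cconj_RtoC; unfold numden_factor; ring. Qed.

Lemma bnumden_at_1 l : List.Forall in_disc l -> exists q, bnumden l 1 = RtoC q /\ (0 < q)%R.
Proof.
  induction 1 as [|a l Ha Hl [q [Hq Hq0]]].
  - exists 1%R; split; [reflexivity | lra].
  - exists (Cmod (1 - a) ^ 2 * q)%R; split.
    + simpl; fold (bnumden l 1); rewrite Hq, numden_factor_at_1, RtoC_mult; reflexivity.
    + apply Rmult_lt_0_compat; [|exact Hq0].
      apply pow_lt, Cmod_gt_0, Cminus_eq_contra.
      intros H1; unfold in_disc in Ha; rewrite <- H1, Cmod_1 in Ha; lra.
Qed.

Lemma crit_poly_at_1 l : List.Forall in_disc l ->
  exists p, crit_poly l 1 = RtoC p /\ (0 <= p)%R /\ (l <> nil -> 0 < p)%R.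
Proof.
  induction 1 as [|a l Ha Hl [p [Hp [Hp0 _]]]]; [exists 0%R; repeat split; [lra | congruence]|].
  destruct (bnumden_at_1 l Hl) as [q [Hq Hq0]].
  pose proof (in_disc_Cmod2 a Ha).
  exists ((1 - Cmod a ^ 2) * q + Cmod (1 - a) ^ 2 * p)%R; split.
  - simpl crit_poly; rewrite Hq, Hp, numden_factor_at_1.
    rewrite RtoC_plus, !RtoC_mult, RtoC_minus, !Cmod2_conj; ring.
  - assert (0 < (1 - Cmod a ^ 2) * q)%R by (apply Rmult_lt_0_compat; lra).
    assert (0 <= Cmod (1 - a) ^ 2 * p)%R by (apply Rmult_le_pos; [apply pow2_ge_0 | exact Hp0]).
    split; intros; lra.
Qed.

Lemma crit_poly_NoDup_roots_in_disc (l cs : list C) :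
  List.Forall in_disc l -> l <> nil -> NoDup cs ->
  (forall c, In c cs -> in_disc c /\ crit_poly l c = 0) ->
  (length cs <= length l - 1)%nat.
Proof.
  intros Hl Hnil Hnd Hcs.
  set (nz := remove Ceq_dec 0 cs).
  assert (Hnz : forall c, In c nz -> In c cs /\ c <> 0) by (intros c; apply in_remove).
  assert (Hlen : (length (cs ++ map circle_inv nz) <= 2 * pred (length l))%nat).
  { apply (poly_fun_NoDup_roots _ (crit_poly l) 1); [apply poly_fun_crit_poly | | |].
    - destruct (crit_poly_at_1 l Hl) as [p [Hp [_ Hp0]]]; rewrite Hp.
      intros H0; apply RtoC_inj in H0; specialize (Hp0 Hnil); lra.
    - apply NoDup_app; [exact Hnd | |].
      + apply NoDup_map_NoDup_ForallPairs;
          [|unfold nz; rewrite <- remove_alt; apply NoDup_filter, Hnd].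
        intros c c' Hc Hc' Heq.
        rewrite <- (circle_inv_involutive c), <- (circle_inv_involutive c'), Heq;
          [reflexivity | apply Hnz; auto ..].
      + intros c Hc Hc'; apply in_map_iff in Hc' as [c0 [<- Hc0]].
        destruct (Hnz c0 Hc0) as [Hc0cs Hc0nz].
        exact (circle_inv_not_in_disc c0 Hc0nz (proj1 (Hcs c0 Hc0cs)) (proj1 (Hcs _ Hc))).
    - intros c Hc; apply in_app_or in Hc as [Hc|Hc]; [apply Hcs, Hc|].
      apply in_map_iff in Hc as [c0 [<- Hc0]]; destruct (Hnz c0 Hc0) as [Hc0cs Hc0nz].
      apply crit_poly_root_reflect; [exact Hc0nz | apply Hcs, Hc0cs]. }
  rewrite length_app, length_map in Hlen.
  pose proof (length_remove_NoDup Ceq_dec 0 cs Hnd) as Hcs_nz; fold nz in Hcs_nz.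
  destruct l; [congruence | simpl in *; lia].
Qed.

Lemma crit_poly_root_of_critical_point (g : C) (l : list C) (z : C) :
  g <> 0 -> List.Forall in_disc l -> in_disc z ->
  critical_point (blaschke g l) z -> crit_poly l z = 0.
Proof.
  intros Hg Hl Hz Hcrit.
  set (D := bden l z); assert (HD : D <> 0) by (apply bden_neq0; auto).
  assert (Hder : g * (crit_poly l z / (D * D)) = 0).
  { apply (is_cderive_unique (blaschke g l) z);
      [apply is_cderive_blaschke | apply is_cderive_C_NormedModule, Hcrit]; auto. }
  replace (crit_poly l z) with (/ g * (g * (crit_poly l z / (D * D))) * (D * D))
    by (field; split; assumption).
  rewrite Hder; ring.
Qed.

Lemma blaschke_critical_values (g : C) (l : list C) :
  Cmod g = 1%R -> List.Forall in_disc l -> l <> nil ->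
  has_at_most (length l - 1) (critical_value (blaschke g l)).
Proof.
  intros Hg Hl Hnil.
  assert (Hg0 : g <> 0) by (intros ->; rewrite Cmod_0 in Hg; lra).
  apply (has_at_most_subset _ _
           (fun w => exists z, (in_disc z /\ crit_poly l z = 0) /\ w = blaschke g l z)).
  - intros w [_ [z [Hz [Hcrit ->]]]].
    exists z; split; [|reflexivity].
    split; [exact Hz | apply (crit_poly_root_of_critical_point g); auto].
  - apply has_at_most_image, has_at_most_NoDup.
    intros cs; apply crit_poly_NoDup_roots_in_disc; auto.
Qed.

(** * Compositions *)

Definition admissible (p : C * list C) : Prop :=
  blaschke_data (fst p) (snd p) /\ (1 <= bdeg p)%nat.

Lemma admissible_zeros_neq_nil p : admissible p -> snd p <> nil.
Proof. intros [_ Hdeg] Hnil; unfold bdeg in Hdeg; rewrite Hnil in Hdeg; simpl in Hdeg; lia. Qed.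

Lemma compose_list_in_disc Bs z :
  List.Forall admissible Bs -> in_disc z -> in_disc (compose_list Bs z).
Proof.
  intros HBs Hz; induction HBs as [|p Bs Hp HBs IH]; [exact Hz|].
  pose proof (admissible_zeros_neq_nil p Hp); destruct Hp as [[Hg Hl] _].
  apply blaschke_in_disc; auto.
Qed.

Lemma ex_cderive_compose_list Bs z :
  List.Forall admissible Bs -> in_disc z -> ex_cderive (compose_list Bs) z.
Proof.
  intros HBs; revert z; induction HBs as [|p Bs Hp HBs IH]; intros z Hz.
  - eexists; apply is_cderive_id.
  - destruct (IH z Hz) as [d Hd], Hp as [[_ Hl] _].
    destruct (ex_cderive_blaschke (fst p) (snd p) (compose_list Bs z)) as [d' Hd'];
      [exact Hl | apply compose_list_in_disc; auto|].
    eexists; apply (is_cderive_comp (blaschke_of p) (compose_list Bs)); [exact Hd' | exact Hd].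
Qed.

Lemma compose_list_critical_values Bs :
  List.Forall admissible Bs ->
  has_at_most (fold_right (fun p acc => (bdeg p - 1) + acc) 0 Bs)%nat
    (critical_value (compose_list Bs)).
Proof.
  induction 1 as [|p Bs Hp HBs IH].
  - exists nil; split; [apply le_n|]; intros w [_ [z [_ [Hcrit _]]]]; exfalso.
    apply C1_nz, (is_cderive_unique (fun t => t) z);
      [apply is_cderive_id | apply is_cderive_C_NormedModule, Hcrit].
  - apply (has_at_most_subset _ _ (fun w => critical_value (blaschke_of p) w
             \/ exists v, critical_value (compose_list Bs) v /\ w = blaschke_of p v)).
    + intros w; apply (critical_value_comp (blaschke_of p) (compose_list Bs)).
      * intros z Hz; apply compose_list_in_disc; auto.
      * intros z Hz; apply ex_cderive_blaschke; [apply Hp | exact Hz].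
      * intros z Hz; apply ex_cderive_compose_list; auto.
    + pose proof (admissible_zeros_neq_nil p Hp); destruct Hp as [[Hg Hl] _].
      apply has_at_most_union; [apply blaschke_critical_values; auto|].
      apply has_at_most_image, IH.
Qed.

Theorem proposition4p3 (Bs : list (C * list C)) :
  List.Forall (fun p => blaschke_data (fst p) (snd p) /\ (1 <= bdeg p)%nat) Bs ->
  exists s : list C,
    (length s <= fold_right (fun p acc => (bdeg p - 1) + acc) 0 Bs)%nat /\
    forall w, critical_value (compose_list Bs) w -> In w s.
Proof. exact (compose_list_critical_values Bs). Qed.
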